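(* Let $(\Omega,\mathcal{F})$ be a measurable space, $\mathcal{P}$ a nonempty set of probability measures on it, $\hat{\mathbb{E}}[Z]=\sup_{P\in\mathcal{P}}E_P[Z]$, and let $X,Y,Z$ be random variables with $\hat{\mathbb{E}}[X^2]+\hat{\mathbb{E}}[Y^2]+\hat{\mathbb{E}}[Z^2]<\infty$. Then: (1) $\overline{C}(X,Y)=\overline{C}(Y,X)$ and $\underline{C}(X,Y)=\underline{C}(Y,X)$; (2) for all $a,b\in\mathbb{R}$, $\overline{C}(X+a,Y+b)=\overline{C}(X,Y)$ and $\underline{C}(X+a,Y+b)=\underline{C}(X,Y)$; (3) $\overline{C}(X+Y,Z)\le\overline{C}(X,Z)+\overline{C}(Y,Z)$; (4) $\underline{C}(X+Y,Z)\ge\underline{C}(X,Z)+\underline{C}(Y,Z)$; (5) for all $a,b\in\mathbb{R}$ with $ab\ge0$, $\overline{C}(aX,bY)=ab\,\overline{C}(X,Y)$ and $\underline{C}(aX,bY)=ab\,\underline{C}(X,Y)$; (6) for all $a,b\in\mathbb{R}$ with $ab\le 0$, $\overline{C}(aX,bY)=ab\,\underline{C}(X,Y)$; in particular $\underline{C}(X,Y)=-\overline{C}(-X,Y)=-\overline{C}(X,-Y)$.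
   Context: For a random variable $W$ with $\hat{\mathbb{E}}[W^2]<\infty$: $\overline{\mu}_W=\hat{\mathbb{E}}[W]$, $\underline{\mu}_W=-\hat{\mathbb{E}}[-W]$, $M_W=[\underline{\mu}_W,\overline{\mu}_W]$. Upper covariance: $\overline{C}(X,Y)=\max_{\mu_2\in M_Y}\min_{\mu_1\in M_X}\hat{\mathbb{E}}[(X-\mu_1)(Y-\mu_2)]$; lower covariance: $\underline{C}(X,Y)=\min_{\mu_2\in M_Y}\max_{\mu_1\in M_X}\left(-\hat{\mathbb{E}}[-(X-\mu_1)(Y-\mu_2)]\right)$. *)

From mathcomp Require Import all_boot all_order all_algebra.
From mathcomp Require Import all_classical all_reals all_analysis.
Set Implicit Arguments. Unset Strict Implicit. Unset Printing Implicit Defensive.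
Import Order.TTheory GRing.Theory Num.Theory.
Local Open Scope classical_set_scope.
Local Open Scope ring_scope.

Section SublinearCov.
Context {d : measure_display} {T : measurableType d} {R : realType}.
Variable PP : set (probability T R).

Definition Ehat (W : T -> R) : \bar R :=
  ereal_sup [set (\int[P]_x (W x)%:E)%E | P in PP].

Definition mu_up (W : T -> R) : \bar R := Ehat W.
Definition mu_lo (W : T -> R) : \bar R := (- Ehat (fun w => (- W w)%R))%E.

Definition Mint (W : T -> R) : set R :=
  [set m : R | (mu_lo W <= m%:E)%E /\ (m%:E <= mu_up W)%E].

Definition cov_up (X Y : T -> R) : \bar R :=
  ereal_sup [set ereal_inf [set Ehat (fun w => (X w - m1) * (Y w - m2))
                             | m1 in Mint X] | m2 in Mint Y].

Definition cov_lo (X Y : T -> R) : \bar R :=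
  ereal_inf [set ereal_sup [set (- Ehat (fun w => (- ((X w - m1) * (Y w - m2)))%R))%E
                             | m1 in Mint X] | m2 in Mint Y].
End SublinearCov.

From mathcomp Require Import all_boot all_order all_algebra.
From mathcomp Require Import all_classical all_reals all_analysis.
From mathcomp Require Import ring lra.
Set Implicit Arguments. Unset Strict Implicit. Unset Printing Implicit Defensive.
Import Order.TTheory GRing.Theory Num.Theory.
Local Open Scope classical_set_scope.
Local Open Scope ring_scope.

(* Write x_P, y_P, s_P for E_P[X], E_P[Y], E_P[XY].  Then
   \hat E[(X - m1)(Y - m2)] = sup_P (s_P - m1 y_P - m2 x_P + m1 m2), so the upper
   covariance is a max-min of functions affine in m1.  A one-dimensional minimax
   argument (the lower and upper bounds on m1 are compatible as soon as they are
   compatible two at a time) identifies it with the supremum, over two-point mixtures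
   l P + (1 - l) Q of elements of PP, of the ordinary covariance of X and Y under the
   mixture.  That expression is symmetric in X and Y, invariant under translations,
   subadditive in X and positively homogeneous, which gives (1)-(5) for the upper
   covariance.  The definitions give directly
   \underline C(X, Y) = - \overline C(-X, Y) = - \overline C(X, -Y), which transfers
   these properties to the lower covariance and yields (6). *)

Lemma exists_between (R : realType) (A B : set R) : A !=set0 -> B !=set0 ->
  (forall a b, A a -> B b -> a <= b) ->
  exists m, (forall a, A a -> a <= m) /\ (forall b, B b -> m <= b).
Proof.
move=> [a0 Aa0] [b0 Bb0] AB; exists (sup A); split.
  by move=> a Aa; apply: ub_le_sup => //; exists b0 => a' /AB; apply.
by move=> b Bb; apply: ge_sup; [exists a0 | move=> a /AB; apply].
Qed.

Lemma normrM_le_sqrD (R : realDomainType) (u v : R) : `|u * v| <= u ^+ 2 + v ^+ 2.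
Proof.
rewrite ler_norml; apply/andP; split.
  by have := sqr_ge0 (u + v); rewrite !expr2; nra.
by have := sqr_ge0 (u - v); rewrite !expr2; nra.
Qed.

(* The measures of PP are abstracted into an index set [S], and [x], [y], [s] stand
   for i |-> E_i[X], E_i[Y], E_i[XY]: [esup]/[einf] play the role of [mu_up]/[mu_lo],
   [minimax_cov] that of [cov_up], and [mixture_cov x y s i j l] is the covariance of
   X and Y under the mixture l i + (1 - l) j. *)
Section MixtureCovariance.
Variables (R : realType) (I : Type) (S : set I).

Definition esup (f : I -> R) : \bar R := ereal_sup [set (f i)%:E | i in S].
Definition einf (f : I -> R) : \bar R := (- esup (fun i => (- f i)%R))%E.
Definition mean_interval (f : I -> R) : set R :=
  [set m | (einf f <= m%:E)%E /\ (m%:E <= esup f)%E].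

Definition centered_moment (x y s : I -> R) (m1 m2 : R) (i : I) :=
  s i - m1 * y i - m2 * x i + m1 * m2.

Definition minimax_cov (x y s : I -> R) : \bar R :=
  ereal_sup [set ereal_inf [set esup (centered_moment x y s m1 m2)
                             | m1 in mean_interval x] | m2 in mean_interval y].

Definition mix (l u v : R) := l * u + (1 - l) * v.

Definition mixtures : set (I * I * R) :=
  [set t | [/\ S t.1.1, S t.1.2 & 0 <= t.2 <= 1]].

Definition mixture_cov (x y s : I -> R) i j l :=
  mix l (s i) (s j) - mix l (x i) (x j) * mix l (y i) (y j).

Definition mixture_cov_sup (x y s : I -> R) : \bar R :=
  ereal_sup [set (mixture_cov x y s t.1.1 t.1.2 t.2)%:E | t in mixtures].

Lemma esup_ubound (f : I -> R) i : S i -> ((f i)%:E <= esup f)%E.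
Proof. by move=> Si; apply: ereal_sup_ubound; exists i. Qed.

Lemma mix_le_esup (f : I -> R) i j l : S i -> S j -> 0 <= l <= 1 ->
  ((mix l (f i) (f j))%:E <= esup f)%E.
Proof.
move=> Si Sj /andP[l0 l1].
have [fij|fji] := lerP (f i) (f j).
  by apply: le_trans (esup_ubound f Sj); rewrite lee_fin /mix; nra.
by apply: le_trans (esup_ubound f Si); rewrite lee_fin /mix; nra.
Qed.

Lemma einf_le_mix (f : I -> R) i j l : S i -> S j -> 0 <= l <= 1 ->
  (einf f <= (mix l (f i) (f j))%:E)%E.
Proof.
move=> Si Sj l01; rewrite /einf leeNl -EFinN.
have -> : - mix l (f i) (f j) = mix l (- f i) (- f j) by rewrite /mix; ring.
exact: (mix_le_esup (fun k => - f k)).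
Qed.

Lemma bounded_mean_interval (f : I -> R) : S !=set0 ->
  (exists M, forall i, S i -> `|f i| <= M) ->
  exists lo hi, [/\ einf f = lo%:E, esup f = hi%:E & forall i, S i -> lo <= f i <= hi].
Proof.
move=> [i0 Si0] [M fM].
have esup_real (g : I -> R) : (forall i, S i -> `|g i| <= M) ->
    exists2 r, esup g = r%:E & forall i, S i -> g i <= r.
  move=> gM; have gub : (esup g <= M%:E)%E.
    by apply: ge_ereal_sup => _ [i Si <-]; rewrite lee_fin (le_trans (ler_norm _)) ?gM.
  have glb := esup_ubound g Si0.
  have gfin : esup g \is a fin_num.
    by rewrite fin_numE; apply/andP; split; apply/eqP => geq; move: gub glb; rewrite geq.
  exists (fine (esup g)); first by rewrite fineK.
  by move=> i Si; rewrite -lee_fin fineK // esup_ubound.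
have [hi fhi fihi] := esup_real f fM.
have [nlo fnlo finlo] :
    exists2 r, esup (fun i => - f i) = r%:E & forall i, S i -> - f i <= r.
  by apply: esup_real => i Si; rewrite normrN fM.
exists (- nlo), hi; split => //; first by rewrite /einf fnlo.
by move=> i Si; rewrite fihi // andbT lerNl finlo.
Qed.

Lemma mixture_cov_le_sup x y s i j l : mixtures (i, j, l) ->
  ((mixture_cov x y s i j l)%:E <= mixture_cov_sup x y s)%E.
Proof. by move=> Mt; apply: ereal_sup_ubound; exists (i, j, l). Qed.

Lemma mixture_cov_diag x y s i : mixture_cov x y s i i 1 = s i - x i * y i.
Proof. rewrite /mixture_cov /mix; ring. Qed.

Lemma diag_mixture i : S i -> mixtures (i, i, 1).
Proof. by move=> Si; split => //=; rewrite ler01 lexx. Qed.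

Lemma mixture_cov_sup_le_minimax x y s : (mixture_cov_sup x y s <= minimax_cov x y s)%E.
Proof.
apply: ge_ereal_sup => _ [[[i j] l] [/= Si Sj l01] <-].
pose m2 := mix l (y i) (y j).
apply: le_ereal_sup_tmp.
exists (ereal_inf [set esup (centered_moment x y s m1 m2) | m1 in mean_interval x]).
  by exists m2 => //; split; [apply: einf_le_mix | apply: mix_le_esup].
apply: le_ereal_inf_tmp => _ [m1 _ <-].
have -> : mixture_cov x y s i j l =
    mix l (centered_moment x y s m1 m2 i) (centered_moment x y s m1 m2 j).
  by rewrite /mixture_cov /centered_moment /m2 /mix; ring.
exact: mix_le_esup.
Qed.

(* Choosing [l] this way makes the [y]-mean of the mixture equal to [m]. *)
Lemma mixture_cov_balanced x y s i j (m w : R) : y i != y j ->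
  (y i - y j) * (mixture_cov x y s i j ((m - y j) / (y i - y j)) - w) =
    (m - y j) * (s i - m * x i - w) + (y i - m) * (s j - m * x j - w).
Proof. by move=> yij; rewrite /mixture_cov /mix; field; rewrite subr_eq0. Qed.

(* For [b i > 0] (resp. [b i < 0]) the constraint [c i <= m * b i] is a lower
   (resp. upper) bound on [m], so pairwise compatibility of the constraints suffices. *)
Lemma affine_constraints_solvable (lo hi : R) (x b c : I -> R) :
  S !=set0 -> (forall i, S i -> lo <= x i <= hi) ->
  (forall i, S i -> c i <= x i * b i) ->
  (forall i j, S i -> S j -> 0 < b i -> b j < 0 -> - b j * c i + b i * c j <= 0) ->
  exists2 m, lo <= m <= hi & forall i, S i -> c i <= m * b i.
Proof.
move=> [i0 Si0] xlh cx cpair.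
pose A := [set z | z = lo \/ exists2 i, S i /\ 0 < b i & z = c i / b i].
pose B := [set z | z = hi \/ exists2 j, S j /\ b j < 0 & z = c j / b j].
have AB a z : A a -> B z -> a <= z.
  case=> [->|[i [Si bi] ->]] [->|[j [Sj bj] ->]].
  - by have /andP[] := xlh i0 Si0; apply: le_trans.
  - rewrite ler_ndivlMr //; have /andP[xj _] := xlh j Sj; have := cx j Sj; nra.
  - rewrite ler_pdivrMr //; have /andP[_ xi] := xlh i Si; have := cx i Si; nra.
  - rewrite ler_pdivrMr // mulrAC ler_ndivlMr //; have := cpair i j Si Sj bi bj; nra.
have [m [Am Bm]] := exists_between (ex_intro _ lo (or_introl erefl))
  (ex_intro _ hi (or_introl erefl)) AB.
exists m; first by rewrite Am ?Bm //; [left | left].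
move=> i Si; have [bn|bp|bz] := ltgtP (b i) 0.
- by rewrite -ler_ndivlMr // Bm //; right; exists i.
- by rewrite -ler_pdivrMr // Am //; right; exists i.
- by have := cx i Si; rewrite bz !mulr0.
Qed.

Lemma minimax_le_mixture_cov_sup x y s : S !=set0 ->
  (exists M, forall i, S i -> `|x i| <= M) ->
  (minimax_cov x y s <= mixture_cov_sup x y s)%E.
Proof.
move=> Sn xbd; have [i0 Si0] := Sn.
have [lo [hi [xlo xhi xlh]]] := bounded_mean_interval Sn xbd.
apply: ge_ereal_sup => _ [m2 _ <-].
case Ew : (mixture_cov_sup x y s) => [w| |]; last 2 first.
- by rewrite leey.
- by have := mixture_cov_le_sup x y s (diag_mixture Si0); rewrite Ew leeNy_eq.
have le_w i j l : mixtures (i, j, l) -> mixture_cov x y s i j l <= w.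
  by move=> Mijl; rewrite -lee_fin -Ew mixture_cov_le_sup.
(* [centered_moment x y s m1 m2 i <= w] reads [c i <= m1 * b i]. *)
pose b i := y i - m2; pose c i := s i - m2 * x i - w.
have diag_bound i : S i -> c i <= x i * b i.
  by move=> Si; have := le_w i i 1 (diag_mixture Si); rewrite mixture_cov_diag /b /c; lra.
have pair_bound i j : S i -> S j -> 0 < b i -> b j < 0 -> - b j * c i + b i * c j <= 0.
  rewrite /b /c => Si Sj bi bj.
  have yij : y i != y j by rewrite gt_eqF //; lra.
  have l01 : 0 <= (m2 - y j) / (y i - y j) <= 1.
    by rewrite divr_ge0 ?ler_pdivrMr ?mul1r /=; lra.
  have := le_w _ _ _ (And3 Si Sj l01).
  have := @mixture_cov_balanced x y s i j m2 w yij; nra.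
have [m1 m1lh m1w] := affine_constraints_solvable Sn xlh diag_bound pair_bound.
apply: le_trans (ereal_inf_lbound _) _.
  by exists m1 => //; case/andP: m1lh => ? ?; split; rewrite ?xlo ?xhi lee_fin.
apply: ge_ereal_sup => _ [i Si <-]; rewrite lee_fin /centered_moment.
by have := m1w i Si; rewrite /b /c; nra.
Qed.

Lemma minimax_covE x y s : S !=set0 -> (exists M, forall i, S i -> `|x i| <= M) ->
  minimax_cov x y s = mixture_cov_sup x y s.
Proof.
move=> Sn xbd; apply/eqP; rewrite eq_le.
by rewrite minimax_le_mixture_cov_sup // mixture_cov_sup_le_minimax.
Qed.

Lemma eq_mixture_cov_sup x y s x' y' s' :
  (forall i, S i -> [/\ x i = x' i, y i = y' i & s i = s' i]) ->
  mixture_cov_sup x y s = mixture_cov_sup x' y' s'.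
Proof.
move=> e; congr ereal_sup; apply: eq_imagel => -[[i j] l] [/= Si Sj _].
by rewrite /mixture_cov; case: (e i Si) => -> -> ->; case: (e j Sj) => -> -> ->.
Qed.

Lemma mixture_cov_supC x y s : mixture_cov_sup x y s = mixture_cov_sup y x s.
Proof.
by congr ereal_sup; apply: eq_imagel => t _; rewrite /mixture_cov mulrC.
Qed.

Lemma mixture_cov_sup_shift x y s (a b : R) :
  mixture_cov_sup (fun i => x i + a) (fun i => y i + b)
    (fun i => s i + a * y i + b * x i + a * b) = mixture_cov_sup x y s.
Proof.
congr ereal_sup; apply: eq_imagel => t _; congr EFin; rewrite /mixture_cov /mix; ring.
Qed.

Lemma mixture_cov_supD (x1 x2 y s1 s2 : I -> R) :
  (mixture_cov_sup (fun i => (x1 i + x2 i)%R) y (fun i => (s1 i + s2 i)%R)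
    <= mixture_cov_sup x1 y s1 + mixture_cov_sup x2 y s2)%E.
Proof.
apply: ge_ereal_sup => _ [[[i j] l] Mijl <-].
have -> : mixture_cov (fun i => x1 i + x2 i) y (fun i => s1 i + s2 i) i j l =
    mixture_cov x1 y s1 i j l + mixture_cov x2 y s2 i j l.
  by rewrite /mixture_cov /mix; ring.
by rewrite EFinD; apply: leeD; apply: mixture_cov_le_sup.
Qed.

Lemma mixture_cov_supZ x y s (a b : R) : S !=set0 -> 0 <= a * b ->
  mixture_cov_sup (fun i => a * x i) (fun i => b * y i) (fun i => a * b * s i) =
    ((a * b)%:E * mixture_cov_sup x y s)%E.
Proof.
move=> [i Si] ab; rewrite /mixture_cov_sup -ereal_supZl //; last first.
  by apply/set0P; exists (mixture_cov x y s i i 1)%:E, (i, i, 1); first exact: diag_mixture.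
rewrite !image_comp; congr ereal_sup; apply: eq_imagel => t _ /=.
by rewrite -EFinM /mixture_cov /mix; congr EFin; ring.
Qed.

Lemma mixture_cov_sup_gtNy x y s : S !=set0 -> (-oo < mixture_cov_sup x y s)%E.
Proof.
move=> [i Si]; apply: lt_le_trans (mixture_cov_le_sup x y s (diag_mixture Si)).
by rewrite ltNyr.
Qed.

End MixtureCovariance.

Section UpperExpectation.
Context {d : measure_display} {T : measurableType d} {R : realType}.
Variable PP : set (probability T R).

Definition integrable_under (g : T -> R) :=
  measurable_fun setT g /\ forall P, PP P -> P.-integrable setT (EFin \o g).

Definition expect (P : probability T R) (g : T -> R) := fine (\int[P]_x (g x)%:E).

Lemma integral_expect g P : integrable_under g -> PP P ->
  (\int[P]_x (g x)%:E)%E = (expect P g)%:E.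
Proof. by move=> [_ Ig] PPP; rewrite fineK // integrable_fin_num // Ig. Qed.

Lemma eq_expect P f g : f =1 g -> expect P f = expect P g.
Proof. by move=> /funext ->. Qed.

Lemma integrable_underD f g : integrable_under f -> integrable_under g ->
  integrable_under (fun w => f w + g w).
Proof.
move=> [mf If] [mg Ig]; split; first exact: measurable_realfun.measurable_funD.
move=> P PPP; have := integrableD measurableT (If P PPP) (Ig P PPP).
by apply: (eq_integrable measurableT) => w _ /=; rewrite EFinD.
Qed.

Lemma integrable_underZ k f : integrable_under f -> integrable_under (fun w => k * f w).
Proof.
move=> [mf If]; split; first exact: measurable_realfun.measurable_funM.
move=> P PPP; have := integrableZl measurableT k (If P PPP).
by apply: (eq_integrable measurableT) => w _ /=; rewrite EFinM.
Qed.

Lemma integrable_underN f : integrable_under f -> integrable_under (fun w => - f w).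
Proof.
move=> If; rewrite (_ : (fun w => - f w) = (fun w => -1 * f w)).
  exact: integrable_underZ.
by apply/funext => w; rewrite mulN1r.
Qed.

Lemma integrable_under_cst k : integrable_under (fun _ => k).
Proof. by split=> // P _; apply: finite_measure_integrable_cst. Qed.

Lemma integrable_under_le (f g : T -> R) : measurable_fun setT f -> integrable_under g ->
  (forall w, `|f w| <= g w) -> integrable_under f.
Proof.
move=> mf [mg Ig] fg; split => // P PPP.
apply: (le_integrable measurableT _ _ (Ig P PPP)).
  exact/measurable_realfun.measurable_EFinP.
move=> w _; change (`|(f w)%:E| <= `|(g w)%:E|)%E.
by rewrite !abse_EFin lee_fin (le_trans (fg w)) //; exact: ler_norm.
Qed.

Lemma expectD f g P : integrable_under f -> integrable_under g -> PP P ->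
  expect P (fun w => f w + g w) = expect P f + expect P g.
Proof.
move=> [_ If] [_ Ig] PPP; rewrite /expect.
under eq_integral do rewrite EFinD.
rewrite (integralD measurableT (If P PPP) (Ig P PPP)).
by rewrite fineD //; apply: integrable_fin_num => //; [apply: If | apply: Ig].
Qed.

Lemma expectZ k f P : integrable_under f -> PP P ->
  expect P (fun w => k * f w) = k * expect P f.
Proof.
move=> [_ If] PPP; rewrite /expect.
under eq_integral do rewrite EFinM.
rewrite (integralZl measurableT (If P PPP)).
by rewrite fineM //; apply: integrable_fin_num => //; apply: If.
Qed.

Lemma expectN f P : integrable_under f -> PP P -> expect P (fun w => - f w) = - expect P f.
Proof.
move=> If PPP; rewrite -mulN1r -(expectZ _ If PPP).
by apply: eq_expect => w; rewrite mulN1r.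
Qed.

Lemma expect_cst k P : expect P (fun _ => k) = k.
Proof.
rewrite /expect (integral_cst P measurableT k%:E).
by rewrite (_ : _ [set: T] = 1%E) ?mule1 //; exact: probability_setT.
Qed.

Lemma expect_le f g P : integrable_under f -> integrable_under g -> PP P ->
  (forall w, f w <= g w) -> expect P f <= expect P g.
Proof.
move=> If Ig PPP fg; rewrite -lee_fin -!integral_expect //.
by apply: le_integral => //; [apply: If.2 | apply: Ig.2 | move=> w _; rewrite lee_fin].
Qed.

Lemma EhatE g : integrable_under g -> Ehat PP g = esup PP (expect^~ g).
Proof.
by move=> Ig; congr ereal_sup; apply: eq_imagel => P PPP; rewrite integral_expect.
Qed.

Definition bounded_second_moment (U : T -> R) :=
  [/\ measurable_fun setT U, integrable_under (fun w => U w ^+ 2) &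
      exists K, forall P, PP P -> expect P (fun w => U w ^+ 2) <= K].

Lemma bounded_second_moment_cst c : bounded_second_moment (fun _ => c).
Proof.
split; [exact: measurable_cst | exact: integrable_under_cst |].
by exists (c ^+ 2) => P _; rewrite expect_cst.
Qed.

Lemma integrable_under_mul U V : bounded_second_moment U -> bounded_second_moment V ->
  integrable_under (fun w => U w * V w).
Proof.
move=> [mU IU2 _] [mV IV2 _].
apply: (integrable_under_le _ (integrable_underD IU2 IV2)) => [|w].
  exact: measurable_realfun.measurable_funM.
exact: normrM_le_sqrD.
Qed.

Lemma bounded_second_moment_integrable U : bounded_second_moment U -> integrable_under U.
Proof.
move=> hU; have := integrable_under_mul hU (bounded_second_moment_cst 1).
by rewrite (_ : (fun w => U w * 1) = U) //; apply/funext => w; rewrite mulr1.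
Qed.

Lemma bounded_second_momentD U V : bounded_second_moment U -> bounded_second_moment V ->
  bounded_second_moment (fun w => U w + V w).
Proof.
move=> hU hV; have IUV := integrable_under_mul hU hV.
case: hU hV => mU IU2 [KU HU] [mV IV2 [KV HV]].
have sqrD : (fun w => (U w + V w) ^+ 2) =
    (fun w => U w ^+ 2 + (2 * (U w * V w) + V w ^+ 2)).
  by apply/funext => w; ring.
have I2 : integrable_under (fun w => (U w + V w) ^+ 2).
  by rewrite sqrD; do 2 apply: integrable_underD => //; apply: integrable_underZ.
split => //; first exact: measurable_realfun.measurable_funD.
exists (2 * KU + 2 * KV) => P PPP.
have I2' := integrable_underD (integrable_underZ 2 IU2) (integrable_underZ 2 IV2).
apply: (le_trans (expect_le I2 I2' PPP _)).
  by move=> w; have := sqr_ge0 (U w - V w); rewrite !expr2; nra.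
rewrite (expectD (integrable_underZ 2 IU2) (integrable_underZ 2 IV2) PPP).
rewrite (expectZ _ IU2 PPP) (expectZ _ IV2 PPP).
by have := HU P PPP; have := HV P PPP; lra.
Qed.

Lemma bounded_second_momentZ k U : bounded_second_moment U ->
  bounded_second_moment (fun w => k * U w).
Proof.
case=> mU IU2 [K HK].
have sqrZ : (fun w => (k * U w) ^+ 2) = (fun w => k ^+ 2 * U w ^+ 2).
  by apply/funext => w; rewrite exprMn.
split; first exact: measurable_realfun.measurable_funM.
  by rewrite sqrZ; apply: integrable_underZ.
exists (k ^+ 2 * K) => P PPP; rewrite sqrZ (expectZ _ IU2 PPP).
by rewrite ler_wpM2l ?sqr_ge0 ?HK.
Qed.

Lemma bounded_second_momentN U : bounded_second_moment U ->
  bounded_second_moment (fun w => - U w).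
Proof.
move=> /(bounded_second_momentZ (-1)).
by rewrite (_ : (fun w => -1 * U w) = (fun w => - U w)) // (funext (fun w => mulN1r _)).
Qed.

Lemma bounded_second_moment_expect U : bounded_second_moment U ->
  exists M, forall P, PP P -> `|expect P U| <= M.
Proof.
move=> hU; have IU := bounded_second_moment_integrable hU.
case: hU => _ IU2 [K HK]; exists (1 + K) => P PPP.
have I1 := integrable_underD (integrable_under_cst 1) IU2.
have bound f : integrable_under f -> (forall w, f w <= 1 + U w ^+ 2) -> expect P f <= 1 + K.
  move=> If fle; apply: le_trans (expect_le If I1 PPP fle) _.
  by rewrite (expectD (integrable_under_cst 1) IU2 PPP) expect_cst lerD2l HK.
have normU w : `|U w| <= 1 + U w ^+ 2.
  by have := normrM_le_sqrD (U w) 1; rewrite mulr1 expr1n addrC.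
rewrite ler_norml; apply/andP; split.
  rewrite lerNl -(expectN IU PPP); apply: bound; first exact: integrable_underN.
  by move=> w; have := normU w; rewrite ler_norml => /andP[]; lra.
by apply: bound => // w; have := normU w; rewrite ler_norml => /andP[].
Qed.

Lemma Ehat_sqr_ge0 (U : T -> R) : PP !=set0 -> (0 <= Ehat PP (fun w => (U w ^+ 2)%R))%E.
Proof.
move=> [P PPP]; apply: le_trans (ereal_sup_ubound _); last by exists P.
by apply: integral_ge0 => w _; rewrite lee_fin sqr_ge0.
Qed.

Lemma bounded_second_momentP (U : T -> R) : measurable_fun setT U ->
  (Ehat PP (fun w => (U w ^+ 2)%R) < +oo)%E -> bounded_second_moment U.
Proof.
move=> mU EU.
have int_le P : PP P -> (\int[P]_x (U x ^+ 2)%:E <= Ehat PP (fun w => (U w ^+ 2)%R))%E.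
  by move=> PPP; apply: ereal_sup_ubound; exists P.
have IU2 : integrable_under (fun w => U w ^+ 2).
  split => [|P PPP]; first exact: measurable_realfun.measurable_funX.
  apply/integrableP; split.
    exact/measurable_realfun.measurable_EFinP/measurable_realfun.measurable_funX.
  apply: le_lt_trans EU; apply: le_trans (int_le P PPP).
  rewrite (eq_integral (fun w => (U w ^+ 2)%:E)) // => w _ /=.
  by rewrite ger0_norm // sqr_ge0.
split => //; move: EU int_le; case: (Ehat _ _) => [K| |] // _ int_le.
  by exists K => P PPP; rewrite -lee_fin -integral_expect // int_le.
by exists 0 => P PPP; have := int_le P PPP; rewrite integral_expect // leeNy_eq.
Qed.

End UpperExpectation.

Section UpperCovariance.
Context {d : measure_display} {T : measurableType d} {R : realType}.
Variable PP : set (probability T R).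

Lemma MintE U : integrable_under PP U -> Mint PP U = mean_interval PP (expect^~ U).
Proof.
move=> IU; rewrite /Mint /mu_up /mu_lo (EhatE IU) (EhatE (integrable_underN IU)).
suff -> : esup PP (expect^~ (fun w => - U w)) = esup PP (fun P => - expect P U) by [].
by congr ereal_sup; apply: eq_imagel => P PPP; rewrite (expectN IU).
Qed.

Lemma expect_centered_product U V P m1 m2 :
  bounded_second_moment PP U -> bounded_second_moment PP V -> PP P ->
  integrable_under PP (fun w => (U w - m1) * (V w - m2)) /\
  expect P (fun w => (U w - m1) * (V w - m2)) =
    centered_moment (expect^~ U) (expect^~ V) (expect^~ (fun w => U w * V w)) m1 m2 P.
Proof.
move=> hU hV PPP.
have IU := bounded_second_moment_integrable hU.
have IV := bounded_second_moment_integrable hV.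
have IUV := integrable_under_mul hU hV.
have -> : (fun w => (U w - m1) * (V w - m2)) =
    (fun w => U w * V w + (- m1 * V w + (- m2 * U w + m1 * m2))).
  by apply/funext => w; ring.
have I1 := integrable_underZ (- m1) IV; have I2 := integrable_underZ (- m2) IU.
have I3 := integrable_under_cst PP (m1 * m2).
have I23 := integrable_underD I2 I3; have I123 := integrable_underD I1 I23.
split; first exact: integrable_underD.
rewrite (expectD IUV I123 PPP) (expectD I1 I23 PPP) (expectD I2 I3 PPP).
rewrite (expectZ _ IV PPP) (expectZ _ IU PPP) expect_cst.
by rewrite /centered_moment; ring.
Qed.

Lemma cov_upE U V : PP !=set0 -> bounded_second_moment PP U -> bounded_second_moment PP V ->
  cov_up PP U V =
    mixture_cov_sup PP (expect^~ U) (expect^~ V) (expect^~ (fun w => U w * V w)).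
Proof.
move=> PPn hU hV.
rewrite -minimax_covE //; last exact: bounded_second_moment_expect.
rewrite /cov_up !MintE; try exact: bounded_second_moment_integrable.
congr ereal_sup; apply: eq_imagel => m2 _; congr ereal_inf; apply: eq_imagel => m1 _.
have [P0 PP0] := PPn.
rewrite EhatE; last exact: (expect_centered_product m1 m2 hU hV PP0).1.
congr ereal_sup; apply: eq_imagel => P PPP.
by rewrite (expect_centered_product m1 m2 hU hV PPP).2.
Qed.

Lemma MintN U : Mint PP (fun w => - U w) = [set - m | m in Mint PP U].
Proof.
have mu_upN : mu_up PP (fun w => - U w) = (- mu_lo PP U)%E by rewrite /mu_lo oppeK.
have mu_loN : mu_lo PP (fun w => - U w) = (- mu_up PP U)%E.
  by rewrite /mu_lo /mu_up; congr (- Ehat _ _)%E; apply/funext => w; rewrite opprK.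
apply/seteqP; split => [m [lo_m m_up]|_ [m [lo_m m_up] <-]].
  exists (- m); last exact: opprK.
  by split; rewrite EFinN; [rewrite leeNr -mu_upN | rewrite leeNl -mu_loN].
by split; rewrite EFinN; [rewrite mu_loN leeN2 | rewrite mu_upN leeN2].
Qed.

Lemma cov_lo_upNl U V : cov_lo PP U V = (- cov_up PP (fun w => (- U w)%R) V)%E.
Proof.
rewrite /cov_lo /cov_up /ereal_inf; congr (- _)%E; congr ereal_sup.
rewrite image_comp; apply: eq_imagel => m2 _ /=.
congr (- _)%E; congr ereal_sup.
rewrite MintN !image_comp; apply: eq_imagel => m1 _ /=.
congr (- _)%E; congr (Ehat PP); apply/funext => w; ring.
Qed.

Lemma cov_lo_upNr U V : cov_lo PP U V = (- cov_up PP U (fun w => (- V w)%R))%E.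
Proof.
rewrite /cov_lo /cov_up /ereal_inf; congr (- _)%E.
rewrite MintN !image_comp; congr ereal_sup; apply: eq_imagel => m2 _ /=.
congr (- _)%E; congr ereal_sup.
rewrite image_comp; apply: eq_imagel => m1 _ /=.
congr (- _)%E; congr (Ehat PP); apply/funext => w; ring.
Qed.

End UpperCovariance.

Section CovarianceProperties.
Context {d : measure_display} {T : measurableType d} {R : realType}.
Variable PP : set (probability T R).
Hypothesis PPn : PP !=set0.

Lemma cov_upC U V : bounded_second_moment PP U -> bounded_second_moment PP V ->
  cov_up PP U V = cov_up PP V U.
Proof.
move=> hU hV; rewrite !cov_upE // mixture_cov_supC.
by apply: eq_mixture_cov_sup => P _; split => //; apply: eq_expect => w; rewrite mulrC.
Qed.

Lemma cov_up_shift U V a b : bounded_second_moment PP U -> bounded_second_moment PP V ->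
  cov_up PP (fun w => U w + a) (fun w => V w + b) = cov_up PP U V.
Proof.
move=> hU hV; have IU := bounded_second_moment_integrable hU.
have IV := bounded_second_moment_integrable hV.
rewrite !cov_upE //;
  try by apply: bounded_second_momentD => //; apply: bounded_second_moment_cst.
rewrite -[RHS](mixture_cov_sup_shift PP _ _ _ a b).
apply: eq_mixture_cov_sup => P PPP; split.
- by rewrite (expectD IU (integrable_under_cst _ a) PPP) expect_cst.
- by rewrite (expectD IV (integrable_under_cst _ b) PPP) expect_cst.
- transitivity (expect P (fun w => (U w - - a) * (V w - - b))).
    by apply: eq_expect => w; rewrite !opprK.
  by rewrite (expect_centered_product _ _ hU hV PPP).2 /centered_moment; ring.
Qed.

Lemma cov_upDl U1 U2 V : bounded_second_moment PP U1 -> bounded_second_moment PP U2 ->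
  bounded_second_moment PP V ->
  (cov_up PP (fun w => (U1 w + U2 w)%R) V <= cov_up PP U1 V + cov_up PP U2 V)%E.
Proof.
move=> h1 h2 hV; have I1 := bounded_second_moment_integrable h1.
have I2 := bounded_second_moment_integrable h2.
have I1V := integrable_under_mul h1 hV; have I2V := integrable_under_mul h2 hV.
rewrite !cov_upE //; last exact: bounded_second_momentD.
rewrite (eq_mixture_cov_sup (x' := fun P => expect P U1 + expect P U2) (y' := expect^~ V)
   (s' := fun P => expect P (fun w => U1 w * V w) + expect P (fun w => U2 w * V w))).
  exact: mixture_cov_supD.
move=> P PPP; split => //; first exact: (expectD I1 I2 PPP).
by rewrite -(expectD I1V I2V PPP); apply: eq_expect => w; rewrite mulrDl.
Qed.

Lemma cov_upZ U V a b : bounded_second_moment PP U -> bounded_second_moment PP V ->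
  0 <= a * b ->
  cov_up PP (fun w => a * U w) (fun w => b * V w) = ((a * b)%:E * cov_up PP U V)%E.
Proof.
move=> hU hV ab; have IUV := integrable_under_mul hU hV.
rewrite !cov_upE //; try exact: bounded_second_momentZ.
rewrite -mixture_cov_supZ //; apply: eq_mixture_cov_sup => P PPP; split.
- exact/expectZ/PPP/bounded_second_moment_integrable.
- exact/expectZ/PPP/bounded_second_moment_integrable.
- by rewrite -(expectZ _ IUV PPP); apply: eq_expect => w; ring.
Qed.

Lemma cov_up_gtNy U V : bounded_second_moment PP U -> bounded_second_moment PP V ->
  (-oo < cov_up PP U V)%E.
Proof. by move=> hU hV; rewrite cov_upE //; exact: mixture_cov_sup_gtNy. Qed.

Lemma cov_loC U V : bounded_second_moment PP U -> bounded_second_moment PP V ->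
  cov_lo PP U V = cov_lo PP V U.
Proof.
by move=> hU hV; rewrite cov_lo_upNl cov_lo_upNr cov_upC //; exact: bounded_second_momentN.
Qed.

Lemma cov_lo_shift U V a b : bounded_second_moment PP U -> bounded_second_moment PP V ->
  cov_lo PP (fun w => U w + a) (fun w => V w + b) = cov_lo PP U V.
Proof.
move=> hU hV; rewrite !cov_lo_upNl.
have -> : (fun w => - (U w + a)) = (fun w => - U w + - a).
  by apply/funext => w; rewrite opprD.
by rewrite cov_up_shift //; exact: bounded_second_momentN.
Qed.

Lemma cov_loDl U1 U2 V : bounded_second_moment PP U1 -> bounded_second_moment PP U2 ->
  bounded_second_moment PP V ->
  (cov_lo PP U1 V + cov_lo PP U2 V <= cov_lo PP (fun w => (U1 w + U2 w)%R) V)%E.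
Proof.
move=> h1 h2 hV; have h1N := bounded_second_momentN h1.
have h2N := bounded_second_momentN h2.
rewrite !cov_lo_upNl -oppeD; last first.
  by apply: ltninfty_adde_def; rewrite inE /= cov_up_gtNy.
rewrite leeN2 (_ : (fun w => - (U1 w + U2 w)) = (fun w => - U1 w + - U2 w)).
  exact: cov_upDl.
by apply/funext => w; rewrite opprD.
Qed.

Lemma cov_loZ U V a b : bounded_second_moment PP U -> bounded_second_moment PP V ->
  0 <= a * b ->
  cov_lo PP (fun w => a * U w) (fun w => b * V w) = ((a * b)%:E * cov_lo PP U V)%E.
Proof.
move=> hU hV ab; rewrite !cov_lo_upNl muleN.
have -> : (fun w => - (a * U w)) = (fun w => a * - U w) by apply/funext => w; rewrite mulrN.
by rewrite cov_upZ //; exact: bounded_second_momentN.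
Qed.

Lemma cov_upZ_le0 U V a b : bounded_second_moment PP U -> bounded_second_moment PP V ->
  a * b <= 0 ->
  cov_up PP (fun w => a * U w) (fun w => b * V w) = ((a * b)%:E * cov_lo PP U V)%E.
Proof.
move=> hU hV ab.
have ab' : 0 <= - a * b by rewrite mulNr oppr_ge0.
have -> : (fun w => a * U w) = (fun w => - a * - U w) by apply/funext => w; rewrite mulrNN.
rewrite cov_upZ //; last exact: bounded_second_momentN.
by rewrite cov_lo_upNl mulNr EFinN mulNe muleN.
Qed.

End CovarianceProperties.

Theorem proposition3p7 (d : measure_display) (T : measurableType d) (R : realType)
  (PP : set (probability T R)) (PPne : PP !=set0)
  (X Y Z : T -> R)
  (mX : measurable_fun setT X) (mY : measurable_fun setT Y)
  (mZ : measurable_fun setT Z)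
  (Hfin : (Ehat PP (fun w => (X w ^+ 2)%R) + Ehat PP (fun w => (Y w ^+ 2)%R)
           + Ehat PP (fun w => (Z w ^+ 2)%R) < +oo)%E) :
  (* (1) *)
  (cov_up PP X Y = cov_up PP Y X /\ cov_lo PP X Y = cov_lo PP Y X) /\
  (* (2) *)
  (forall a b : R,
     cov_up PP (fun w => X w + a) (fun w => Y w + b) = cov_up PP X Y /\
     cov_lo PP (fun w => X w + a) (fun w => Y w + b) = cov_lo PP X Y) /\
  (* (3) *)
  (cov_up PP (fun w => (X w + Y w)%R) Z <= cov_up PP X Z + cov_up PP Y Z)%E /\
  (* (4) *)
  (cov_lo PP X Z + cov_lo PP Y Z <= cov_lo PP (fun w => (X w + Y w)%R) Z)%E /\
  (* (5) *)
  (forall a b : R, 0 <= a * b ->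
     cov_up PP (fun w => a * X w) (fun w => b * Y w) = ((a * b)%:E * cov_up PP X Y)%E /\
     cov_lo PP (fun w => a * X w) (fun w => b * Y w) = ((a * b)%:E * cov_lo PP X Y)%E) /\
  (* (6) *)
  (forall a b : R, a * b <= 0 ->
     cov_up PP (fun w => a * X w) (fun w => b * Y w) = ((a * b)%:E * cov_lo PP X Y)%E) /\
  cov_lo PP X Y = (- cov_up PP (fun w => (- X w)%R) Y)%E /\
  cov_lo PP X Y = (- cov_up PP X (fun w => (- Y w)%R))%E.
Proof.
have sqr_ge0 := fun U => Ehat_sqr_ge0 U PPne.
have [hX hY hZ] : [/\ bounded_second_moment PP X, bounded_second_moment PP Y
                   & bounded_second_moment PP Z].
  split; apply: bounded_second_momentP => //; apply: le_lt_trans Hfin.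
  - by rewrite -addeA leeDl // adde_ge0.
  - by rewrite addeAC leeDr // adde_ge0.
  - by rewrite leeDr // adde_ge0.
split; first by split; [exact: cov_upC | exact: cov_loC].
split; first by move=> a b; split; [exact: cov_up_shift | exact: cov_lo_shift].
split; first exact: cov_upDl.
split; first exact: cov_loDl.
split; first by move=> a b ab; split; [exact: cov_upZ | exact: cov_loZ].
split; first by move=> a b ab; exact: cov_upZ_le0.
by split; [exact: cov_lo_upNl | exact: cov_lo_upNr].
Qed.
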